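(* Let $(X_m)_{m\in\mathbb Z}$ and $(Y_m)_{m\in\mathbb Z}$ be homogeneous second order recurrence sequences with constant coefficients that possess the same recurrence relation. Suppose $Y_m\neq 0$ for all integers $m$, and that the sequences $\{X_m\}$ and $\{Y_m\}$ have at most three members in common. Then for all integers $a,b,c,d,e,m$, $$(X_{d-a}Y_{e-b}-X_{e-a}Y_{d-b})X_{m-c}=(X_{d-c}Y_{e-b}-X_{e-c}Y_{d-b})X_{m-a}+(X_{d-a}X_{e-c}-X_{e-a}X_{d-c})Y_{m-b}.$$
   Context: A homogeneous second order recurrence sequence with constant coefficients is a sequence $(X_m)_{m\in\mathbb Z}$ of complex numbers for which there are constants $p,q\in\mathbb C$, $q\neq 0$, with $X_m=pX_{m-1}+qX_{m-2}$ for all $m\in\mathbb Z$. Two such sequences possess the same recurrence relation if they satisfy it with the same constants $p,q$. *)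

(* The complex numbers are not available as a MathComp
   structure here; we quantify over an arbitrary numClosedFieldType C
   (the complex numbers are the intended instance). *)
From HB Require Import structures.
From mathcomp Require Import all_boot all_order all_algebra.
Set Implicit Arguments. Unset Strict Implicit. Unset Printing Implicit Defensive.
Import Order.TTheory GRing.Theory Num.Theory.
Local Open Scope ring_scope.

Definition satisfies_rec (C : numClosedFieldType) (p q : C) (X : int -> C) : Prop :=
  forall m : int, X m = p * X (m - 1) + q * X (m - 2).

Definition same_recurrence (C : numClosedFieldType) (X Y : int -> C) : Prop :=
  exists p q : C, q != 0 /\ satisfies_rec p q X /\ satisfies_rec p q Y.

Definition at_most_three_common (C : numClosedFieldType) (X Y : int -> C) : Prop :=
  forall s : seq C, uniq s ->
    (forall z, z \in s -> (exists i, X i = z) /\ (exists j, Y j = z)) ->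
    (size s <= 3)%N.

(* A solution of X_m = p X_(m-1) + q X_(m-2) with q <> 0 is determined by
   X_0 and X_1, linearly and with coefficients independent of X: running the
   recurrence forwards and, dividing by q, backwards gives
   X_k = A_k X_0 + B_k X_1.  Hence for three solutions u, v, w the vectors
   (u_k, v_k, w_k) all lie in the span of two fixed vectors, so every 3x3
   determinant of values vanishes; the claimed identity is the cofactor
   expansion of such a determinant for u = X(. - a), v = Y(. - b),
   w = X(. - c). *)
From HB Require Import structures.
From mathcomp Require Import all_boot all_order all_algebra.
From mathcomp Require Import zify ring.
Set Implicit Arguments. Unset Strict Implicit. Unset Printing Implicit Defensive.
Import Order.TTheory GRing.Theory Num.Theory.
Local Open Scope ring_scope.

Lemma int_ind2 (P : int -> Prop) :
  P 0 -> P 1 ->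
  (forall k, P k -> P (k + 1) -> P (k + 2)) ->
  (forall k, P (k + 1) -> P (k + 2) -> P k) ->
  forall k, P k.
Proof.
move=> P0 P1 fwd bwd k.
suff: P k /\ P (k + 1) by case.
elim/int_ind: k => [|n [Pn Pn1] | n [Pn Pn1]]; first by split.
- have -> : n.+1%:Z = n%:Z + 1 by lia.
  by split; last by rewrite -addrA; apply: fwd.
- move: Pn Pn1; have -> : - n%:Z = - n.+1%:Z + 1 by lia.
  by rewrite -addrA => Pk1 Pk2; split; first exact: bwd.
Qed.

Lemma satisfies_rec_shift (C : numClosedFieldType) (p q : C) (X : int -> C)
    (a : int) :
  satisfies_rec p q X -> satisfies_rec p q (fun m => X (m - a)).
Proof.
move=> hX m /=; rewrite hX.
by have [-> ->] : m - a - 1 = m - 1 - a /\ m - a - 2 = m - 2 - a by split; lia.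
Qed.

Section SolutionSpan.
Variables (C : numClosedFieldType) (p q : C).
Hypothesis q_neq0 : q != 0.

Definition spanned01 (k : int) : Prop :=
  exists A B : C, forall X, satisfies_rec p q X -> X k = A * X 0 + B * X 1.

Lemma satisfies_rec_step (X : int -> C) (k : int) :
  satisfies_rec p q X -> X (k + 2) = p * X (k + 1) + q * X k.
Proof.
move=> hX; rewrite hX.
by have [-> ->] : k + 2 - 1 = k + 1 /\ k + 2 - 2 = k by split; lia.
Qed.

Lemma spanned01_fwd k :
  spanned01 k -> spanned01 (k + 1) -> spanned01 (k + 2).
Proof.
move=> [A0 [B0 h0]] [A1 [B1 h1]].
exists (p * A1 + q * A0), (p * B1 + q * B0) => X hX.
by rewrite satisfies_rec_step // h0 // h1 //; ring.
Qed.

Lemma spanned01_bwd k :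
  spanned01 (k + 1) -> spanned01 (k + 2) -> spanned01 k.
Proof.
move=> [A1 [B1 h1]] [A2 [B2 h2]].
exists ((A2 - p * A1) / q), ((B2 - p * B1) / q) => X hX.
have -> : X k = (X (k + 2) - p * X (k + 1)) / q.
  by rewrite satisfies_rec_step //; field.
by rewrite h1 // h2 //; field.
Qed.

Lemma spanned01_all k : spanned01 k.
Proof.
apply: int_ind2 spanned01_fwd spanned01_bwd k.
- by exists 1, 0 => X _; ring.
- by exists 0, 1 => X _; ring.
Qed.

Lemma satisfies_rec_minor_expansion (u v w : int -> C) (d e m : int) :
  satisfies_rec p q u -> satisfies_rec p q v -> satisfies_rec p q w ->
  (u d * v e - u e * v d) * w m
  = (w d * v e - w e * v d) * u m + (u d * w e - u e * w d) * v m.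
Proof.
move=> hu hv hw.
have [Ad [Bd hd]] := spanned01_all d.
have [Ae [Be he]] := spanned01_all e.
have [Am [Bm hm]] := spanned01_all m.
by rewrite !hd // !he // !hm //; ring.
Qed.

End SolutionSpan.

Theorem lemma7 (C : numClosedFieldType) (X Y : int -> C)
  (hrec : same_recurrence X Y)
  (hY : forall m : int, Y m != 0)
  (hcommon : at_most_three_common X Y) :
  forall a b c d e m : int,
    (X (d - a) * Y (e - b) - X (e - a) * Y (d - b)) * X (m - c)
    = (X (d - c) * Y (e - b) - X (e - c) * Y (d - b)) * X (m - a)
      + (X (d - a) * X (e - c) - X (e - a) * X (d - c)) * Y (m - b).
Proof.
move=> a b c d e m.
have [p [q [q_neq0 [hX hYrec]]]] := hrec.
have := satisfies_rec_minor_expansion q_neq0 d e m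
  (satisfies_rec_shift a hX) (satisfies_rec_shift b hYrec)
  (satisfies_rec_shift c hX).
by move=> /=.
Qed.
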